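(* Let $\mathbb{E}$ be a finitely complete category, $\Sigma$ a point-congruous class of split epimorphisms, and suppose $\mathbb{E}$ is a $\Sigma$-Mal'tsev category. For every object $Y$, the full subcategory $\Sigma l_Y(\mathbb{E})$ of the slice category $\mathbb{E}/Y$ whose objects are the $\Sigma$-special morphisms with codomain $Y$ is a Mal'tsev category, i.e. every reflexive relation in $\Sigma l_Y(\mathbb{E})$ is an equivalence relation.
   Context: A split epimorphism is a pair $(f,s)$ with $fs=1$. A class $\Sigma$ of split epimorphisms is fibrational if it contains all split epimorphisms $(f,s)$ with $f$ invertible and is stable under pullback along any morphism; it is point-congruous if moreover the full subcategory $\Sigma(\mathbb{E})$ of the category $\mathrm{Pt}(\mathbb{E})$ of split epimorphisms (with commuting squares as morphisms) is closed under finite limits in $\mathrm{Pt}(\mathbb{E})$. A pair of morphisms with common codomain $W$ is jointly extremally epic if it factors jointly through no non-invertible monomorphism into $W$. $\mathbb{E}$ is $\Sigma$-Mal'tsev if for every split epimorphism $(f,s)\colon X\rightleftarrows Y$ in $\Sigma$ and every split epimorphism $(g,t)$ with $g\colon Y'\to Y$, letting $X'=Y'\times_YX$, $s'=(1_{Y'},sg)$, $\bar t=(tf,1_X)$, the pair $(s',\bar t)$ is jointly extremally epic. A $\Sigma$-relation is a reflexive relation $(d_0,d_1)\colon S\rightarrowtail X\times X$ with reflexivity $s_0$ such that $(d_0,s_0)\in\Sigma$. A morphism $f$ is $\Sigma$-special when its kernel relation $R[f]$ is a $\Sigma$-relation. *)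

From Stdlib Require Import ProofIrrelevance FinFun.

Set Implicit Arguments.
Unset Strict Implicit.

Record Category := {
  Ob :> Type;
  Hom : Ob -> Ob -> Type;
  idm : forall X, Hom X X;
  comp : forall X Y Z, Hom Y Z -> Hom X Y -> Hom X Z;   (* comp g f = g o f *)
  comp_id_l : forall X Y (f : Hom X Y), comp (idm Y) f = f;
  comp_id_r : forall X Y (f : Hom X Y), comp f (idm X) = f;
  comp_assoc : forall X Y Z W (h : Hom Z W) (g : Hom Y Z) (f : Hom X Y),
      comp h (comp g f) = comp (comp h g) f
}.

Arguments Hom {c} _ _.
Arguments idm {c} _.
Arguments comp {c X Y Z} _ _.

Declare Scope cat_scope.
Notation "g ∘ f" := (comp g f) (at level 40, left associativity) : cat_scope.
Notation "1_ X" := (idm X) (at level 0, X at level 0) : cat_scope.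
Open Scope cat_scope.

Section Basic.
Variable C : Category.

Definition is_mono {X Y : C} (m : Hom X Y) : Prop :=
  forall T (a b : Hom T X), m ∘ a = m ∘ b -> a = b.

Definition is_iso {X Y : C} (f : Hom X Y) : Prop :=
  exists g : Hom Y X, g ∘ f = 1_X /\ f ∘ g = 1_Y.

Definition is_pullback {X Y Y' P : C} (f : Hom X Y) (h : Hom Y' Y)
    (p1 : Hom P Y') (p2 : Hom P X) : Prop :=
  f ∘ p2 = h ∘ p1 /\
  forall T (a : Hom T Y') (b : Hom T X), f ∘ b = h ∘ a ->
    exists u : Hom T P, (p1 ∘ u = a /\ p2 ∘ u = b) /\
      forall u' : Hom T P, p1 ∘ u' = a -> p2 ∘ u' = b -> u' = u.

Record fgraph := {
  gV : Type; gE : Type;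
  gV_fin : Finite gV; gE_fin : Finite gE;
  gsrc : gE -> gV; gtgt : gE -> gV
}.

Record diagram (G : fgraph) := {
  dobj : gV G -> C;
  darr : forall e : gE G, Hom (dobj (gsrc e)) (dobj (gtgt e))
}.

Record cone (G : fgraph) (D : diagram G) := {
  apex : C;
  leg : forall v : gV G, Hom apex (dobj D v);
  leg_comm : forall e : gE G, darr D e ∘ leg (gsrc e) = leg (gtgt e)
}.

Definition is_limit (G : fgraph) (D : diagram G) (L : cone D) : Prop :=
  forall K : cone D,
    exists u : Hom (apex K) (apex L),
      (forall v, leg L v ∘ u = leg K v) /\
      forall u' : Hom (apex K) (apex L),
        (forall v, leg L v ∘ u' = leg K v) -> u' = u.

Definition finitely_complete : Prop :=
  forall (G : fgraph) (D : diagram G), exists L : cone D, is_limit L.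

Definition closed_under_finite_limits (P : C -> Prop) : Prop :=
  forall (G : fgraph) (D : diagram G), (forall v, P (dobj D v)) ->
    forall L : cone D, is_limit L -> P (apex L).

(* Relations and Mal'tsev categories (via generalized elements). *)
Definition jointly_monic {R X : C} (d0 d1 : Hom R X) : Prop :=
  forall T (a b : Hom T R), d0 ∘ a = d0 ∘ b -> d1 ∘ a = d1 ∘ b -> a = b.

Definition is_relation {R X : C} (d0 d1 : Hom R X) : Prop := jointly_monic d0 d1.

Definition rel_reflexive {R X : C} (d0 d1 : Hom R X) : Prop :=
  exists s0 : Hom X R, d0 ∘ s0 = 1_X /\ d1 ∘ s0 = 1_X.

Definition rel_symmetric {R X : C} (d0 d1 : Hom R X) : Prop :=
  forall T (r : Hom T R), exists r' : Hom T R, d0 ∘ r' = d1 ∘ r /\ d1 ∘ r' = d0 ∘ r.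

Definition rel_transitive {R X : C} (d0 d1 : Hom R X) : Prop :=
  forall T (r1 r2 : Hom T R), d1 ∘ r1 = d0 ∘ r2 ->
    exists r3 : Hom T R, d0 ∘ r3 = d0 ∘ r1 /\ d1 ∘ r3 = d1 ∘ r2.

Definition rel_equivalence {R X : C} (d0 d1 : Hom R X) : Prop :=
  rel_reflexive d0 d1 /\ rel_symmetric d0 d1 /\ rel_transitive d0 d1.

Definition Maltsev : Prop :=
  forall (R X : C) (d0 d1 : Hom R X),
    is_relation d0 d1 -> rel_reflexive d0 d1 -> rel_equivalence d0 d1.

End Basic.

Arguments fgraph : clear implicits.

Section FullSub.
Variable C : Category.
Variable P : C -> Prop.

Definition fs_ob := { X : C | P X }.
Definition fs_hom (A B : fs_ob) := Hom (proj1_sig A) (proj1_sig B).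

Definition FullSub : Category.
Proof.
  refine {| Ob := fs_ob; Hom := fs_hom;
            idm := fun A => 1_(proj1_sig A);
            comp := fun A B D (g : fs_hom B D) (f : fs_hom A B) => g ∘ f |}.
  - intros; apply comp_id_l.
  - intros; apply comp_id_r.
  - intros; apply comp_assoc.
Defined.
End FullSub.

Section Slice.
Variable C : Category.
Variable Y : C.

Definition sl_ob := { X : C & Hom X Y }.
Record sl_hom (A B : sl_ob) := {
  sl_map : Hom (projT1 A) (projT1 B);
  sl_comm : projT2 B ∘ sl_map = projT2 A
}.

Lemma sl_hom_eq (A B : sl_ob) (h k : sl_hom A B) : sl_map h = sl_map k -> h = k.
Proof.
  destruct h as [h hc], k as [k kc]; simpl; intros ->.
  f_equal; apply proof_irrelevance.
Qed.

Definition sl_id (A : sl_ob) : sl_hom A A.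
Proof. refine {| sl_map := 1_(projT1 A) |}; apply comp_id_r. Defined.

Definition sl_comp (A B D : sl_ob) (g : sl_hom B D) (f : sl_hom A B) : sl_hom A D.
Proof.
  refine {| sl_map := sl_map g ∘ sl_map f |}.
  rewrite comp_assoc, (sl_comm g); apply (sl_comm f).
Defined.

Definition Slice : Category.
Proof.
  refine {| Ob := sl_ob; Hom := sl_hom; idm := sl_id; comp := sl_comp |}.
  - intros; apply sl_hom_eq; simpl; apply comp_id_l.
  - intros; apply sl_hom_eq; simpl; apply comp_id_r.
  - intros; apply sl_hom_eq; simpl; apply comp_assoc.
Defined.
End Slice.

Section Points.
Variable C : Category.

Record pt_ob := {
  ptX : C; ptY : C;
  ptf : Hom ptX ptY; pts : Hom ptY ptX;
  pt_split : ptf ∘ pts = 1_ptY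
}.

Record pt_hom (p q : pt_ob) := {
  phx : Hom (ptX p) (ptX q);
  phy : Hom (ptY p) (ptY q);
  ph_f : ptf q ∘ phx = phy ∘ ptf p;
  ph_s : phx ∘ pts p = pts q ∘ phy
}.

Lemma pt_hom_eq (p q : pt_ob) (h k : pt_hom p q) :
  phx h = phx k -> phy h = phy k -> h = k.
Proof.
  destruct h as [hx hy h1 h2], k as [kx ky k1 k2]; simpl; intros -> ->.
  f_equal; apply proof_irrelevance.
Qed.

Definition pt_id (p : pt_ob) : pt_hom p p.
Proof.
  refine {| phx := 1_(ptX p); phy := 1_(ptY p) |};
    rewrite comp_id_l, comp_id_r; reflexivity.
Defined.

Definition pt_comp (p q r : pt_ob) (g : pt_hom q r) (f : pt_hom p q) : pt_hom p r.
Proof.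
  refine {| phx := phx g ∘ phx f; phy := phy g ∘ phy f |}.
  - rewrite comp_assoc, (ph_f g), <- comp_assoc, (ph_f f), comp_assoc; reflexivity.
  - rewrite <- comp_assoc, (ph_s f), comp_assoc, (ph_s g), <- comp_assoc; reflexivity.
Defined.

Definition Pt : Category.
Proof.
  refine {| Ob := pt_ob; Hom := pt_hom; idm := pt_id; comp := pt_comp |};
    intros; apply pt_hom_eq; simpl;
    first [apply comp_id_l | apply comp_id_r | apply comp_assoc].
Defined.
End Points.

Section SigmaNotions.
Variable C : Category.

Definition split_class := forall X Y : C, Hom X Y -> Hom Y X -> Prop.

Variable Sigma : split_class.

Definition is_class_of_split_epis : Prop :=
  forall (X Y : C) (f : Hom X Y) (s : Hom Y X), Sigma f s -> f ∘ s = 1_Y.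

Definition fibrational : Prop :=
  (forall (X Y : C) (f : Hom X Y) (s : Hom Y X),
      f ∘ s = 1_Y -> is_iso f -> Sigma f s) /\
  (forall (X Y : C) (f : Hom X Y) (s : Hom Y X), Sigma f s ->
     forall (Y' P : C) (h : Hom Y' Y) (p1 : Hom P Y') (p2 : Hom P X),
       is_pullback f h p1 p2 ->
       forall s' : Hom Y' P, p1 ∘ s' = 1_Y' -> p2 ∘ s' = s ∘ h ->
         Sigma p1 s').

Definition SigmaPt (p : Pt C) : Prop := Sigma (ptf p) (pts p).

Definition point_congruous : Prop :=
  fibrational /\ closed_under_finite_limits (SigmaPt).

Definition jointly_extremally_epic {A B W : C} (u : Hom A W) (v : Hom B W) : Prop :=
  forall (M : C) (m : Hom M W), is_mono m ->
    forall (u' : Hom A M) (v' : Hom B M), m ∘ u' = u -> m ∘ v' = v -> is_iso m.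

(* E is Sigma-Mal'tsev.  X' = Y' x_Y X with projections p1 : X' -> Y',
   p2 : X' -> X;  s' = (1_Y', s g),  tbar = (t f, 1_X). *)
Definition Sigma_Maltsev : Prop :=
  forall (X Y : C) (f : Hom X Y) (s : Hom Y X), Sigma f s ->
  forall (Y' : C) (g : Hom Y' Y) (t : Hom Y Y'), g ∘ t = 1_Y ->
  forall (X' : C) (p1 : Hom X' Y') (p2 : Hom X' X), is_pullback f g p1 p2 ->
  forall (s' : Hom Y' X') (tbar : Hom X X'),
    p1 ∘ s' = 1_Y' -> p2 ∘ s' = s ∘ g ->
    p1 ∘ tbar = t ∘ f -> p2 ∘ tbar = 1_X ->
    jointly_extremally_epic s' tbar.

Definition Sigma_relation {S X : C} (d0 d1 : Hom S X) (s0 : Hom X S) : Prop :=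
  is_relation d0 d1 /\ d0 ∘ s0 = 1_X /\ d1 ∘ s0 = 1_X /\ Sigma d0 s0.

Definition Sigma_special {X Y : C} (f : Hom X Y) : Prop :=
  forall (R : C) (p0 p1 : Hom R X), is_pullback f f p0 p1 ->
  forall s0 : Hom X R, p0 ∘ s0 = 1_X -> p1 ∘ s0 = 1_X ->
    Sigma_relation p0 p1 s0.

Definition SigmaSpecialSlice (Y : C) : Category :=
  FullSub (fun A : Slice Y => Sigma_special (projT2 A)).

End SigmaNotions.

(* Limits of Sigma-special objects over Y are computed in E, and kernel-pair
   points commute with them; since Sigma(E) is closed under finite limits in
   Pt(E), Sigma-special morphisms are stable under pullback in E/Y and every split
   map between them lies in Sigma.  So a reflexive relation in Sigma l_Y(E) is a
   Sigma-relation in E, which the Sigma-Mal'tsev property makes transitive;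
   symmetry follows from transitivity of an auxiliary Sigma-relation on R. *)

From Stdlib Require Import FinFun List.
Import ListNotations.
Set Implicit Arguments.
Unset Strict Implicit.

Ltac assoc_r := repeat (rewrite <- comp_assoc || rewrite comp_id_l || rewrite comp_id_r).
Ltac assoc_r_in H :=
  repeat (rewrite <- comp_assoc in H || rewrite comp_id_l in H || rewrite comp_id_r in H).

Lemma comp_eq_r (C : Category) (X Y Z W : C) (a : Hom Y Z) (b : Hom X Y) (c : Hom X Z) :
  a ∘ b = c -> forall z : Hom W X, a ∘ (b ∘ z) = c ∘ z.
Proof. intros H z; rewrite comp_assoc, H; reflexivity. Qed.

(* Rewrite with [H : a ∘ b = c] inside right-associated composites. *)
Ltac rew H := assoc_r; first [rewrite !(comp_eq_r H) | rewrite !H]; assoc_r.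
Ltac rew_rev H := rew (eq_sym H).

Section Limits.
Variable C : Category.

Lemma pullback_unique {X Y Y' P : C} (f : Hom X Y) (h : Hom Y' Y) p1 p2 :
  @is_pullback C X Y Y' P f h p1 p2 -> forall T (u u' : Hom T P),
  p1 ∘ u = p1 ∘ u' -> p2 ∘ u = p2 ∘ u' -> u = u'.
Proof.
  intros [Hc Hu] T u u' E1 E2.
  destruct (Hu T (p1 ∘ u) (p2 ∘ u)) as [w [_ Hw]].
  { rewrite !comp_assoc, Hc; reflexivity. }
  rewrite (Hw u), (Hw u'); auto.
Qed.

Lemma pullback_lift {X Y Y' P : C} (f : Hom X Y) (h : Hom Y' Y) p1 p2 :
  @is_pullback C X Y Y' P f h p1 p2 -> forall T a b, f ∘ b = h ∘ a ->
  exists u : Hom T P, p1 ∘ u = a /\ p2 ∘ u = b.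
Proof. intros [_ Hu] T a b E. destruct (Hu T a b E) as [w [H _]]; eauto. Qed.

Lemma pullback_id (X : C) : is_pullback (1_X) (1_X) (1_X) (1_X).
Proof.
  split; [reflexivity|]. intros T a b E. assoc_r_in E. subst. exists a. assoc_r.
  split; [split; reflexivity|]. intros u' H1 _. assoc_r_in H1. exact H1.
Qed.

(* The limit of two cospans A -> C0 <- B and A -> C1 <- B with common ends. *)
Definition is_double_pullback (L A B C0 C1 : C) (a0 : Hom A C0) (a1 : Hom A C1)
  (b0 : Hom B C0) (b1 : Hom B C1) (la : Hom L A) (lb : Hom L B) : Prop :=
  a0 ∘ la = b0 ∘ lb /\ a1 ∘ la = b1 ∘ lb /\
  forall T (u : Hom T A) (v : Hom T B), a0 ∘ u = b0 ∘ v -> a1 ∘ u = b1 ∘ v ->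
    exists w, (la ∘ w = u /\ lb ∘ w = v) /\
      forall w', la ∘ w' = u -> lb ∘ w' = v -> w' = w.

Lemma pullback_double_pullback {X Y Y' P : C} (f : Hom X Y) (h : Hom Y' Y) p1 p2 :
  @is_pullback C X Y Y' P f h p1 p2 <-> is_double_pullback h h f f p1 p2.
Proof.
  split.
  - intros [Hc Hu]. split; [auto|]. split; [auto|].
    intros T u v E _. apply (Hu T u v (eq_sym E)).
  - intros [Hc [_ Hu]]. split; [auto|].
    intros T a b E. apply (Hu T a b (eq_sym E) (eq_sym E)).
Qed.

Lemma double_pullback_mono (L A B X : C) (a0 a1 : Hom A X) (b0 b1 : Hom B X)
  (la : Hom L A) (lb : Hom L B) :
  is_double_pullback a0 a1 b0 b1 la lb -> jointly_monic b0 b1 -> is_mono la.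
Proof.
  intros [E0 [E1 Hu]] Hb T u v Euv.
  assert (Hlb : lb ∘ u = lb ∘ v).
  { apply Hb; rewrite !comp_assoc, <- ?E0, <- ?E1, <- !comp_assoc, Euv; reflexivity. }
  destruct (Hu T (la ∘ u) (lb ∘ u)) as [w [_ Hw]];
    [rewrite !comp_assoc, E0; reflexivity | rewrite !comp_assoc, E1; reflexivity|].
  rewrite (Hw u), (Hw v); auto.
Qed.

Inductive cospan_pair_vertex := vA | vB | vC0 | vC1.
Inductive cospan_pair_edge := e0A | e1A | e0B | e1B.

Definition cospan_pair_src (e : cospan_pair_edge) : cospan_pair_vertex :=
  match e with e0A | e1A => vA | e0B | e1B => vB end.
Definition cospan_pair_tgt (e : cospan_pair_edge) : cospan_pair_vertex :=
  match e with e0A | e0B => vC0 | e1A | e1B => vC1 end.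

Lemma cospan_pair_vertex_finite : Finite cospan_pair_vertex.
Proof. exists [vA; vB; vC0; vC1]; intros []; simpl; tauto. Qed.
Lemma cospan_pair_edge_finite : Finite cospan_pair_edge.
Proof. exists [e0A; e1A; e0B; e1B]; intros []; simpl; tauto. Qed.

Definition cospan_pair : fgraph :=
  {| gV_fin := cospan_pair_vertex_finite; gE_fin := cospan_pair_edge_finite;
     gsrc := cospan_pair_src; gtgt := cospan_pair_tgt |}.

Section CospanPair.
Variables (A B C0 C1 : C) (a0 : Hom A C0) (a1 : Hom A C1) (b0 : Hom B C0) (b1 : Hom B C1).

Definition cospan_pair_obj (v : cospan_pair_vertex) : C :=
  match v with vA => A | vB => B | vC0 => C0 | vC1 => C1 end.

Definition cospan_pair_diagram : diagram C cospan_pair :=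
  {| dobj := cospan_pair_obj : gV cospan_pair -> C;
     darr := fun e => match e return Hom (cospan_pair_obj (cospan_pair_src e))
                                         (cospan_pair_obj (cospan_pair_tgt e)) with
                      e0A => a0 | e1A => a1 | e0B => b0 | e1B => b1 end |}.

Definition cospan_pair_cone (T : C) (u : Hom T A) (v : Hom T B)
    (H0 : b0 ∘ v = a0 ∘ u) (H1 : b1 ∘ v = a1 ∘ u) : cone cospan_pair_diagram.
Proof.
  refine (@Build_cone C cospan_pair cospan_pair_diagram T
    (fun w => match w return Hom T (cospan_pair_obj w) with
              vA => u | vB => v | vC0 => a0 ∘ u | vC1 => a1 ∘ u end) _).
  intros []; simpl; auto.
Defined.

Lemma double_pullback_of_limit (L : cone cospan_pair_diagram) :
  is_limit L -> is_double_pullback a0 a1 b0 b1 (leg L vA) (leg L vB).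
Proof.
  intros HL.
  pose proof (leg_comm L e0A) as E0. pose proof (leg_comm L e0B) as E0'.
  pose proof (leg_comm L e1A) as E1. pose proof (leg_comm L e1B) as E1'.
  simpl in *.
  split; [rewrite E0, E0'; reflexivity|]. split; [rewrite E1, E1'; reflexivity|].
  intros T u v H0 H1.
  destruct (HL (cospan_pair_cone (eq_sym H0) (eq_sym H1))) as [w [Hw Hu]].
  exists w. split; [split; [apply (Hw vA) | apply (Hw vB)]|].
  intros w' Ha Hb. apply Hu. intros []; simpl; auto.
  - rewrite <- E0, <- comp_assoc, Ha; reflexivity.
  - rewrite <- E1, <- comp_assoc, Ha; reflexivity.
Qed.

Lemma closed_double_pullback (P : C -> Prop) (L : C) (la : Hom L A) (lb : Hom L B) :
  closed_under_finite_limits P -> P A -> P B -> P C0 -> P C1 ->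
  is_double_pullback a0 a1 b0 b1 la lb -> P L.
Proof.
  intros Hcl PA PB PC0 PC1 [E0 [E1 Hu]].
  change (P (apex (cospan_pair_cone (eq_sym E0) (eq_sym E1)))).
  apply (Hcl cospan_pair cospan_pair_diagram); [intros []; assumption|].
  intros K.
  pose proof (leg_comm K e0A) as K0. pose proof (leg_comm K e0B) as K0'.
  pose proof (leg_comm K e1A) as K1. pose proof (leg_comm K e1B) as K1'.
  simpl in *.
  destruct (Hu _ (leg K vA) (leg K vB)) as [w [[W0 W1] Hw]];
    [rewrite K0, K0'; reflexivity | rewrite K1, K1'; reflexivity|].
  exists w. split.
  - intros []; simpl; auto.
    + rewrite <- comp_assoc, W0; exact K0.
    + rewrite <- comp_assoc, W0; exact K1.
  - intros w' Hw'. apply Hw; [exact (Hw' vA) | exact (Hw' vB)].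
Qed.

Lemma double_pullback_exists : finitely_complete C ->
  exists L (la : Hom L A) (lb : Hom L B), is_double_pullback a0 a1 b0 b1 la lb.
Proof.
  intros HC. destruct (HC cospan_pair cospan_pair_diagram) as [L HL].
  exists (apex L), (leg L vA), (leg L vB). exact (double_pullback_of_limit HL).
Qed.

End CospanPair.

Lemma pullback_exists : finitely_complete C ->
  forall (X Y Y' : C) (f : Hom X Y) (h : Hom Y' Y),
  exists P (p1 : Hom P Y') (p2 : Hom P X), is_pullback f h p1 p2.
Proof.
  intros HC X Y Y' f h.
  destruct (double_pullback_exists h h f f HC) as [P [p1 [p2 H]]].
  exists P, p1, p2. apply pullback_double_pullback, H.
Qed.

Record kernel_pair {X Y : C} (x : Hom X Y) := {
  kp_ob : C;
  kp0 : Hom kp_ob X;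
  kp1 : Hom kp_ob X;
  kp_diag : Hom X kp_ob;
  kp_pullback : is_pullback x x kp0 kp1;
  kp0_diag : kp0 ∘ kp_diag = 1_X;
  kp1_diag : kp1 ∘ kp_diag = 1_X
}.

Lemma kernel_pair_exists : finitely_complete C ->
  forall (X Y : C) (x : Hom X Y), inhabited (kernel_pair x).
Proof.
  intros HC X Y x. destruct (pullback_exists HC x x) as [K [k0 [k1 H]]].
  destruct (pullback_lift H (a := 1_X) (b := 1_X) eq_refl) as [d [D0 D1]].
  exact (inhabits (Build_kernel_pair H D0 D1)).
Qed.

Lemma kernel_pair_map {A B Y : C} (a : Hom A Y) (b : Hom B Y) (h : Hom A B)
  (KA : kernel_pair a) (KB : kernel_pair b) : b ∘ h = a ->
  exists hK : Hom (kp_ob KA) (kp_ob KB),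
    kp0 KB ∘ hK = h ∘ kp0 KA /\ kp1 KB ∘ hK = h ∘ kp1 KA /\
    hK ∘ kp_diag KA = kp_diag KB ∘ h.
Proof.
  intros Hh.
  pose proof (kp_pullback KA) as HKA. pose proof (kp_pullback KB) as HKB.
  destruct (pullback_lift HKB (a := h ∘ kp0 KA) (b := h ∘ kp1 KA)) as [hK [H0 H1]].
  { rew Hh. exact (proj1 HKA). }
  exists hK. do 2 (split; [assumption|]).
  apply (pullback_unique HKB).
  - rew H0. rew (kp0_diag KA). rew (kp0_diag KB). reflexivity.
  - rew H1. rew (kp1_diag KA). rew (kp1_diag KB). reflexivity.
Qed.

End Limits.

Section KernelPairOfPullback.
Variable C : Category.
Variables (A B Cc Y P : C) (a : Hom A Y) (b : Hom B Y) (c : Hom Cc Y).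
Variables (f : Hom A Cc) (g : Hom B Cc) (p1 : Hom P B) (p2 : Hom P A).
Hypothesis HP : is_pullback f g p1 p2.
Variables (KA : kernel_pair a) (KB : kernel_pair b) (KC : kernel_pair c)
  (KP : kernel_pair (a ∘ p2)).
Variables (fK : Hom (kp_ob KA) (kp_ob KC)) (gK : Hom (kp_ob KB) (kp_ob KC))
  (p1K : Hom (kp_ob KP) (kp_ob KB)) (p2K : Hom (kp_ob KP) (kp_ob KA)).
Hypotheses (F0 : kp0 KC ∘ fK = f ∘ kp0 KA) (F1 : kp1 KC ∘ fK = f ∘ kp1 KA)
  (G0 : kp0 KC ∘ gK = g ∘ kp0 KB) (G1 : kp1 KC ∘ gK = g ∘ kp1 KB)
  (P10 : kp0 KB ∘ p1K = p1 ∘ kp0 KP) (P11 : kp1 KB ∘ p1K = p1 ∘ kp1 KP)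
  (P20 : kp0 KA ∘ p2K = p2 ∘ kp0 KP) (P21 : kp1 KA ∘ p2K = p2 ∘ kp1 KP).

Lemma kernel_pair_of_pullback : is_pullback fK gK p1K p2K.
Proof.
  pose proof (proj1 HP) as EP. pose proof (kp_pullback KA) as HKA.
  pose proof (kp_pullback KB) as HKB. pose proof (kp_pullback KC) as HKC.
  pose proof (kp_pullback KP) as HKP.
  split.
  - apply (pullback_unique HKC).
    + rew F0. rew P20. rew G0. rew P10. rew EP. reflexivity.
    + rew F1. rew P21. rew G1. rew P11. rew EP. reflexivity.
  - intros T u v Ev.
    destruct (pullback_lift HP (a := kp0 KB ∘ u) (b := kp0 KA ∘ v)) as [e0 [E01 E02]].
    { rew_rev F0. rewrite Ev. rew G0. reflexivity. }
    destruct (pullback_lift HP (a := kp1 KB ∘ u) (b := kp1 KA ∘ v)) as [e1 [E11 E12]].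
    { rew_rev F1. rewrite Ev. rew G1. reflexivity. }
    destruct (pullback_lift HKP (a := e0) (b := e1)) as [w [W0 W1]].
    { assoc_r. rewrite E12, E02. rew (proj1 HKA). reflexivity. }
    exists w. split; [split|].
    + apply (pullback_unique HKB); [rew P10; rew W0; exact E01 | rew P11; rew W1; exact E11].
    + apply (pullback_unique HKA); [rew P20; rew W0; exact E02 | rew P21; rew W1; exact E12].
    + intros w' Hw1 Hw2. apply (pullback_unique HKP).
      * rewrite W0. apply (pullback_unique HP).
        -- rewrite E01, <- Hw1. rew_rev P10. reflexivity.
        -- rewrite E02, <- Hw2. rew_rev P20. reflexivity.
      * rewrite W1. apply (pullback_unique HP).
        -- rewrite E11, <- Hw1. rew_rev P11. reflexivity.
        -- rewrite E12, <- Hw2. rew_rev P21. reflexivity.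
Qed.

End KernelPairOfPullback.

Section Points.
Variable E : Category.

Lemma pt_pullback_of_components (A B Cp D : Pt E)
  (al : Hom A Cp) (be : Hom B Cp) (da : Hom D A) (db : Hom D B) :
  is_pullback (phx al) (phx be) (phx db) (phx da) ->
  is_pullback (phy al) (phy be) (phy db) (phy da) ->
  is_pullback al be db da.
Proof.
  intros Htop Hbot. split.
  { apply pt_hom_eq; [apply (proj1 Htop) | apply (proj1 Hbot)]. }
  intros K kB kA Hk.
  pose proof (f_equal (@phx E _ _) Hk) as Ex. pose proof (f_equal (@phy E _ _) Hk) as Ey.
  simpl in Ex, Ey.
  destruct (pullback_lift Htop Ex) as [ux [Ux1 Ux2]].
  destruct (pullback_lift Hbot Ey) as [uy [Uy1 Uy2]].
  assert (Hf : ptf D ∘ ux = uy ∘ ptf K).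
  { apply (pullback_unique Hbot).
    - rew_rev (ph_f db). rew Ux1. rew (ph_f kB). rew_rev Uy1. reflexivity.
    - rew_rev (ph_f da). rew Ux2. rew (ph_f kA). rew_rev Uy2. reflexivity. }
  assert (Hs : ux ∘ pts K = pts D ∘ uy).
  { apply (pullback_unique Htop).
    - rew Ux1. rew (ph_s kB). rew (ph_s db). rew Uy1. reflexivity.
    - rew Ux2. rew (ph_s kA). rew (ph_s da). rew Uy2. reflexivity. }
  exists (Build_pt_hom Hf Hs). split.
  - split; apply pt_hom_eq; assumption.
  - intros u' H1 H2. apply pt_hom_eq; simpl.
    + apply (pullback_unique Htop); simpl; rewrite ?Ux1, ?Ux2, <- ?H1, <- ?H2; reflexivity.
    + apply (pullback_unique Hbot); simpl; rewrite ?Uy1, ?Uy2, <- ?H1, <- ?H2; reflexivity.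
Qed.

Variable Sigma : split_class E.

Lemma SigmaPt_pullback (A B Cp D : Pt E)
  (al : Hom A Cp) (be : Hom B Cp) (da : Hom D A) (db : Hom D B) :
  point_congruous Sigma ->
  SigmaPt Sigma A -> SigmaPt Sigma B -> SigmaPt Sigma Cp ->
  is_pullback (phx al) (phx be) (phx db) (phx da) ->
  is_pullback (phy al) (phy be) (phy db) (phy da) ->
  SigmaPt Sigma D.
Proof.
  intros [_ Hcl] SA SB SC Htop Hbot.
  apply (closed_double_pullback (a0 := be) (a1 := be) (b0 := al) (b1 := al)
           (la := db) (lb := da) Hcl SB SA SC SC).
  apply pullback_double_pullback, pt_pullback_of_components; assumption.
Qed.

End Points.

Section SigmaSpecial.
Variables (E : Category) (Sigma : split_class E).
Hypotheses (HC : finitely_complete E) (HPC : point_congruous Sigma).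

Definition kp_point {X Y : E} {x : Hom X Y} (K : kernel_pair x) : Pt E :=
  Build_pt_ob (kp0_diag K).

Lemma special_kp_point {X Y : E} (x : Hom X Y) (K : kernel_pair x) :
  Sigma_special Sigma x -> SigmaPt Sigma (kp_point K).
Proof.
  intros Sx. exact (proj2 (proj2 (proj2
    (Sx _ _ _ (kp_pullback K) _ (kp0_diag K) (kp1_diag K))))).
Qed.

Lemma special_of_kp_point {X Y : E} (x : Hom X Y) :
  (forall K : kernel_pair x, SigmaPt Sigma (kp_point K)) -> Sigma_special Sigma x.
Proof.
  intros HK R q0 q1 HR s H0 H1.
  split; [exact (pullback_unique HR)|]. do 2 (split; [assumption|]).
  exact (HK (Build_kernel_pair HR H0 H1)).
Qed.

Lemma Sigma_iso_point {X Y : E} (f : Hom X Y) (s : Hom Y X) :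
  f ∘ s = 1_Y -> s ∘ f = 1_X -> Sigma f s.
Proof.
  intros Hfs Hsf. apply (proj1 (proj1 HPC)); [exact Hfs|]. exists s; split; assumption.
Qed.

Lemma special_id (Y : E) : Sigma_special Sigma (1_Y).
Proof.
  apply special_of_kp_point; intros K.
  pose proof (kp_pullback K) as HK. pose proof (proj1 HK) as EK. assoc_r_in EK.
  apply Sigma_iso_point; [exact (kp0_diag K)|].
  apply (pullback_unique HK).
  - rew (kp0_diag K). reflexivity.
  - rew (kp1_diag K). symmetry. exact EK.
Qed.

Lemma special_pullback {A B Cc Y : E} (a : Hom A Y) (b : Hom B Y) (c : Hom Cc Y)
  (f : Hom A Cc) (g : Hom B Cc) :
  Sigma_special Sigma a -> Sigma_special Sigma b -> Sigma_special Sigma c ->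
  c ∘ f = a -> c ∘ g = b ->
  forall P (p1 : Hom P B) (p2 : Hom P A), is_pullback f g p1 p2 ->
  Sigma_special Sigma (a ∘ p2).
Proof.
  intros SA SB SC Hf Hg P p1 p2 HP. apply special_of_kp_point; intros KP.
  destruct (kernel_pair_exists HC a) as [KA].
  destruct (kernel_pair_exists HC b) as [KB].
  destruct (kernel_pair_exists HC c) as [KC].
  assert (Hp1 : b ∘ p1 = a ∘ p2). { rewrite <- Hf, <- Hg. rew (proj1 HP). reflexivity. }
  destruct (kernel_pair_map KA KC Hf) as [fK [F0 [F1 Fd]]].
  destruct (kernel_pair_map KB KC Hg) as [gK [G0 [G1 Gd]]].
  destruct (kernel_pair_map KP KB Hp1) as [p1K [P10 [P11 P1d]]].
  destruct (kernel_pair_map KP KA (h := p2) eq_refl) as [p2K [P20 [P21 P2d]]].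
  apply (SigmaPt_pullback
           (al := Build_pt_hom (p := kp_point KA) (q := kp_point KC) F0 Fd)
           (be := Build_pt_hom (p := kp_point KB) (q := kp_point KC) G0 Gd)
           (da := Build_pt_hom (p := kp_point KP) (q := kp_point KA) P20 P2d)
           (db := Build_pt_hom (p := kp_point KP) (q := kp_point KB) P10 P1d));
    simpl; try apply special_kp_point; auto.
  exact (kernel_pair_of_pullback HP F0 F1 G0 G1 P10 P11 P20 P21).
Qed.

Lemma special_kernel_pair {X Y : E} (x : Hom X Y) (K : kernel_pair x) :
  Sigma_special Sigma x -> Sigma_special Sigma (x ∘ kp1 K).
Proof.
  intros Sx.
  exact (special_pullback Sx Sx (special_id (Y := Y)) (comp_id_l x) (comp_id_l x)
           (kp_pullback K)).
Qed.

End SigmaSpecial.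

Section GraphPullback.
Variables (E : Category) (X R Y : E) (x : Hom X Y) (rr : Hom R Y)
  (d0 : Hom R X) (s0 : Hom X R).
Variables (KR : kernel_pair rr) (KX : kernel_pair x) (A : E) (a1 : Hom A X)
  (a2 : Hom A (kp_ob KR)) (ax : Hom A (kp_ob KX)) (ka : Hom R (kp_ob KR)) (dl : Hom R A).
Hypotheses (HA : is_pullback (kp0 KR) s0 a1 a2)
  (AX0 : kp0 KX ∘ ax = a1) (AX1 : kp1 KX ∘ ax = d0 ∘ kp1 KR ∘ a2)
  (KA0 : kp0 KR ∘ ka = s0 ∘ d0) (KA1 : kp1 KR ∘ ka = 1_R)
  (DL1 : a1 ∘ dl = d0) (DL2 : a2 ∘ dl = ka).

(* A is X x_Y R, mapped to X x_Y X by 1 x d0; R is its graph. *)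
Lemma graph_pullback : is_pullback ax (kp_diag KX) d0 dl.
Proof.
  pose proof (kp_pullback KR) as HKR. pose proof (kp_pullback KX) as HKX.
  pose proof (kp0_diag KX) as DX0. pose proof (kp1_diag KX) as DX1.
  split.
  - apply (pullback_unique HKX).
    + rew AX0. rewrite DL1. rew DX0. reflexivity.
    + rew AX1. rew DL2. rew KA1. rew DX1. reflexivity.
  - intros T u v Ev.
    assert (V0 : a1 ∘ v = u) by (rewrite <- AX0; rew Ev; rew DX0; reflexivity).
    assert (V1 : d0 ∘ (kp1 KR ∘ (a2 ∘ v)) = u).
    { pose proof (f_equal (fun z => kp1 KX ∘ z) Ev) as Z. simpl in Z. assoc_r_in Z.
      rewrite !comp_assoc, <- AX1. assoc_r. rewrite Z. rew DX1. reflexivity. }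
    exists (kp1 KR ∘ (a2 ∘ v)). split; [split|].
    + exact V1.
    + apply (pullback_unique HA).
      * rew DL1. rewrite V1, V0. reflexivity.
      * apply (pullback_unique HKR).
        -- rew DL2. rew KA0. rewrite V1. rew (proj1 HA). rewrite V0. reflexivity.
        -- rew DL2. rew KA1. reflexivity.
    + intros w' W1 W2. rewrite <- W2. rew DL2. rew KA1. reflexivity.
Qed.

End GraphPullback.

Section SplitSliceMaps.
Variables (E : Category) (Sigma : split_class E).
Hypotheses (HC : finitely_complete E) (HPC : point_congruous Sigma).

(* With A = X x_Y R, the point (d0, s0) is the pullback of the Sigma-point
   A -> X (a pullback of the kernel-pair point of rr along s0) along the
   diagonal of the kernel pair of x. *)
Lemma Sigma_split_slice_map {X R Y : E} (x : Hom X Y) (rr : Hom R Y)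
  (d0 : Hom R X) (s0 : Hom X R) :
  Sigma_special Sigma x -> Sigma_special Sigma rr -> x ∘ d0 = rr -> d0 ∘ s0 = 1_X ->
  Sigma d0 s0.
Proof.
  intros Sx Sr Hd Hs.
  destruct (kernel_pair_exists HC rr) as [KR]. destruct (kernel_pair_exists HC x) as [KX].
  pose proof (kp_pullback KR) as HKR. pose proof (kp_pullback KX) as HKX.
  assert (Hrs : rr ∘ s0 = x) by (rewrite <- Hd; rew Hs; reflexivity).
  destruct (pullback_exists HC (kp0 KR) s0) as [A [a1 [a2 HA]]].
  destruct (pullback_lift HA (a := 1_X) (b := kp_diag KR ∘ s0)) as [sg [SG1 SG2]].
  { rew (kp0_diag KR). reflexivity. }
  destruct (pullback_lift HKX (a := a1) (b := d0 ∘ kp1 KR ∘ a2)) as [ax [AX0 AX1]].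
  { rew Hd. rew (proj1 HKR). rew (proj1 HA). rew Hrs. reflexivity. }
  destruct (pullback_lift HKR (a := s0 ∘ d0) (b := 1_R)) as [ka [KA0 KA1]].
  { rew Hrs. rewrite Hd. reflexivity. }
  destruct (pullback_lift HA (a := d0) (b := ka)) as [dl [DL1 DL2]]; [exact KA0|].
  assert (Hax : ax ∘ sg = kp_diag KX ∘ 1_X).
  { assoc_r. apply (pullback_unique HKX).
    - rew AX0. rewrite SG1, (kp0_diag KX). reflexivity.
    - rew AX1. rew SG2. rew (kp1_diag KR). rewrite Hs, (kp1_diag KX). reflexivity. }
  assert (Hdl : dl ∘ s0 = sg ∘ 1_X).
  { assoc_r. apply (pullback_unique HA).
    - rew DL1. rewrite Hs, SG1. reflexivity.
    - rew DL2. rewrite SG2. apply (pullback_unique HKR).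
      + rew KA0. rew Hs. rew (kp0_diag KR). reflexivity.
      + rew KA1. rew (kp1_diag KR). reflexivity. }
  assert (Hf1 : kp0 KX ∘ ax = 1_X ∘ a1) by (assoc_r; exact AX0).
  assert (Hf2 : kp0 KX ∘ kp_diag KX = 1_X ∘ 1_X) by (assoc_r; exact (kp0_diag KX)).
  assert (Hf3 : a1 ∘ dl = 1_X ∘ d0) by (assoc_r; exact DL1).
  assert (Hs4 : d0 ∘ s0 = 1_X ∘ 1_X) by (assoc_r; exact Hs).
  pose (PA := Build_pt_ob SG1). pose (PI := Build_pt_ob (comp_id_l (1_X))).
  pose (PD := Build_pt_ob Hs).
  change (SigmaPt Sigma PD).
  apply (SigmaPt_pullback
           (al := Build_pt_hom (p := PA) (q := kp_point KX) Hf1 Hax)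
           (be := Build_pt_hom (p := PI) (q := kp_point KX) Hf2 eq_refl)
           (da := Build_pt_hom (p := PD) (q := PA) Hf3 Hdl)
           (db := Build_pt_hom (p := PD) (q := PI) eq_refl Hs4)); simpl.
  - exact HPC.
  - exact (proj2 (proj1 HPC) _ _ _ _ (special_kp_point KR Sr) _ _ _ _ _ HA sg SG1 SG2).
  - apply (Sigma_iso_point HPC); apply comp_id_l.
  - exact (special_kp_point KX Sx).
  - exact (graph_pullback HA AX0 AX1 KA0 KA1 DL1 DL2).
  - apply pullback_id.
Qed.

End SplitSliceMaps.

Section Relations.
Variables (E : Category) (Sigma : split_class E).
Hypotheses (HC : finitely_complete E) (HPC : point_congruous Sigma)
  (HM : Sigma_Maltsev Sigma).

(* The composable pairs P = R x_X R are jointly covered by s' = (1, s0 d1) and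
   tbar = (s0 d0, 1), both of which factor through the subobject of pairs whose
   composite lies in R. *)
Lemma Sigma_relation_transitive {R X : E} (d0 d1 : Hom R X) (s0 : Hom X R) :
  Sigma d0 s0 -> d0 ∘ s0 = 1_X -> d1 ∘ s0 = 1_X -> jointly_monic d0 d1 ->
  rel_transitive d0 d1.
Proof.
  intros Sg H0 H1 JM T r1 r2 Er.
  destruct (pullback_exists HC d0 d1) as [P [p1 [p2 HP]]].
  destruct (pullback_lift HP (a := 1_R) (b := s0 ∘ d1)) as [sp [SP1 SP2]].
  { rew H0. reflexivity. }
  destruct (pullback_lift HP (a := s0 ∘ d0) (b := 1_R)) as [tb [TB1 TB2]].
  { rew H1. reflexivity. }
  pose proof (HM Sg H1 HP SP1 SP2 TB1 TB2) as Hcover.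
  destruct (double_pullback_exists (d0 ∘ p1) (d1 ∘ p2) d0 d1 HC)
    as [M [m [mq HMq]]].
  pose proof HMq as [M0 [M1 HMu]].
  destruct (HMu R sp (1_R)) as [u [[U1 _] _]].
  { rew SP1. reflexivity. }
  { rew SP2. rew H1. reflexivity. }
  destruct (HMu R tb (1_R)) as [v [[V1 _] _]].
  { rew TB1. rew H0. reflexivity. }
  { rew TB2. reflexivity. }
  destruct (Hcover M m (double_pullback_mono HMq JM) u v U1 V1) as [mi [_ MI]].
  destruct (pullback_lift HP (a := r1) (b := r2)) as [pp [PP1 PP2]].
  { symmetry; exact Er. }
  exists (mq ∘ (mi ∘ pp)). split.
  - rew_rev M0. rew MI. rewrite PP1. reflexivity.
  - rew_rev M1. rew MI. rewrite PP2. reflexivity.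
Qed.

Variables (Y R X : E) (rr : Hom R Y) (x : Hom X Y) (d0 d1 : Hom R X) (s0 : Hom X R).
Hypotheses (Sx : Sigma_special Sigma x) (Sr : Sigma_special Sigma rr)
  (Hd0 : x ∘ d0 = rr) (Hd1 : x ∘ d1 = rr) (Hs0 : d0 ∘ s0 = 1_X) (Hs1 : d1 ∘ s0 = 1_X).

(* The kernel pair Q of (d0, d1) : R -> X x_Y X is Sigma-special over Y, so it
   can test joint monicity. *)
Lemma jointly_monic_of_special_tests :
  (forall Q (q : Hom Q Y) (a b : Hom Q R), Sigma_special Sigma q ->
     rr ∘ a = q -> rr ∘ b = q -> d0 ∘ a = d0 ∘ b -> d1 ∘ a = d1 ∘ b -> a = b) ->
  jointly_monic d0 d1.
Proof.
  intros Htest T a b Ea Eb.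
  destruct (kernel_pair_exists HC x) as [KX]. pose proof (kp_pullback KX) as HKX.
  destruct (pullback_lift HKX (a := d0) (b := d1)) as [rho [RH0 RH1]].
  { rewrite Hd0, Hd1. reflexivity. }
  destruct (pullback_exists HC rho rho) as [Q [q0 [q1 HQ]]].
  pose proof (proj1 HQ) as EQ.
  assert (Hrho : (x ∘ kp1 KX) ∘ rho = rr) by (rew RH1; exact Hd1).
  assert (Hq : q0 = q1).
  { apply (Htest Q (rr ∘ q1)).
    - exact (special_pullback HC HPC Sr Sr (special_kernel_pair HC HPC (K := KX) Sx)
               Hrho Hrho HQ).
    - rewrite <- Hrho. rew EQ. reflexivity.
    - reflexivity.
    - rew_rev RH0. rew EQ. reflexivity.
    - rew_rev RH1. rew EQ. reflexivity. }
  destruct (pullback_lift HQ (a := a) (b := b)) as [c [C0 C1]].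
  { apply (pullback_unique HKX); rew RH0 || rew RH1; symmetry; assumption. }
  rewrite <- C0, <- C1, Hq. reflexivity.
Qed.

Hypothesis JM : jointly_monic d0 d1.

Lemma special_relation_transitive : rel_transitive d0 d1.
Proof.
  exact (Sigma_relation_transitive
           (Sigma_split_slice_map HC HPC Sx Sr Hd0 Hs0) Hs0 Hs1 JM).
Qed.

(* The relation on R relating r and r' over the same point of Y whenever
   d0 r R d1 r'; it is again a Sigma-relation, hence transitive. *)
Lemma shifted_relation : exists (S : E) (e0 e1 : Hom S R),
  rel_transitive e0 e1 /\
  (forall T (r r' rho : Hom T R), rr ∘ r = rr ∘ r' ->
     d0 ∘ rho = d0 ∘ r -> d1 ∘ rho = d1 ∘ r' ->
     exists sg, e0 ∘ sg = r /\ e1 ∘ sg = r') /\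
  (forall T (sg : Hom T S),
     exists rho, d0 ∘ rho = d0 ∘ (e0 ∘ sg) /\ d1 ∘ rho = d1 ∘ (e1 ∘ sg)).
Proof.
  destruct (kernel_pair_exists HC x) as [KX]. destruct (kernel_pair_exists HC rr) as [KR].
  pose proof (kp_pullback KX) as HKX. pose proof (kp_pullback KR) as HKR.
  pose proof (proj1 HKR) as ER.
  destruct (pullback_lift HKX (a := d0) (b := d1)) as [rho [RH0 RH1]].
  { rewrite Hd0, Hd1. reflexivity. }
  destruct (pullback_lift HKX (a := d0 ∘ kp0 KR) (b := d1 ∘ kp1 KR)) as [om [OM0 OM1]].
  { rew Hd0. rew Hd1. exact ER. }
  destruct (pullback_exists HC om rho) as [S [sq [sw HS]]].
  pose proof (proj1 HS) as ES.
  assert (Hsw : Sigma_special Sigma ((rr ∘ kp1 KR) ∘ sw)).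
  { assert (Hom1 : (x ∘ kp1 KX) ∘ om = rr ∘ kp1 KR) by (rew OM1; rew Hd1; reflexivity).
    assert (Hrho : (x ∘ kp1 KX) ∘ rho = rr) by (rew RH1; exact Hd1).
    exact (special_pullback HC HPC (special_kernel_pair HC HPC (K := KR) Sr) Sr
             (special_kernel_pair HC HPC (K := KX) Sx) Hom1 Hrho HS). }
  destruct (pullback_lift HS (a := 1_R) (b := kp_diag KR)) as [sd [SD1 SD2]].
  { apply (pullback_unique HKX).
    - rew OM0. rew (kp0_diag KR). rew RH0. reflexivity.
    - rew OM1. rew (kp1_diag KR). rew RH1. reflexivity. }
  assert (Q0 : (kp0 KR ∘ sw) ∘ sd = 1_R) by (rew SD2; exact (kp0_diag KR)).
  assert (Q1 : (kp1 KR ∘ sw) ∘ sd = 1_R) by (rew SD2; exact (kp1_diag KR)).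
  assert (Hslice : rr ∘ (kp0 KR ∘ sw) = (rr ∘ kp1 KR) ∘ sw) by (rew ER; reflexivity).
  assert (JMS : jointly_monic (kp0 KR ∘ sw) (kp1 KR ∘ sw)).
  { intros T a b Ea Eb. assoc_r_in Ea. assoc_r_in Eb.
    assert (Hw : sw ∘ a = sw ∘ b) by exact (pullback_unique HKR Ea Eb).
    apply (pullback_unique HS); [|exact Hw]. apply JM.
    - rew_rev RH0. rew_rev ES. rewrite Hw. reflexivity.
    - rew_rev RH1. rew_rev ES. rewrite Hw. reflexivity. }
  exists S, (kp0 KR ∘ sw), (kp1 KR ∘ sw). split; [|split].
  - exact (Sigma_relation_transitive
             (Sigma_split_slice_map HC HPC Sr Hsw Hslice Q0) Q0 Q1 JMS).
  - intros T r r' rh Er E0 E1.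
    destruct (pullback_lift HKR (a := r) (b := r')) as [k [K0 K1]]; [symmetry; exact Er|].
    destruct (pullback_lift HS (a := rh) (b := k)) as [sg [SG1 SG2]].
    { apply (pullback_unique HKX).
      - rew OM0. rewrite K0. rew RH0. symmetry; exact E0.
      - rew OM1. rewrite K1. rew RH1. symmetry; exact E1. }
    exists sg. split; [rew SG2; exact K0 | rew SG2; exact K1].
  - intros T sg. exists (sq ∘ sg). split.
    + rew_rev RH0. rew_rev ES. rew OM0. rew RH0. reflexivity.
    + rew_rev RH1. rew_rev ES. rew OM1. rew RH1. reflexivity.
Qed.

(* s0 d1 r ~ r ~ s0 d0 r in the shifted relation, and a witness of the composite
   relates d1 r to d0 r. *)
Lemma special_relation_symmetric : rel_symmetric d0 d1.
Proof.
  intros T r.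
  destruct shifted_relation as [S [e0 [e1 [Htr [Hin Hout]]]]].
  assert (Hrs : rr ∘ s0 = x) by (rewrite <- Hd0; rew Hs0; reflexivity).
  destruct (Hin T (s0 ∘ d1 ∘ r) r (s0 ∘ d1 ∘ r)) as [sg1 [S10 S11]].
  { rew Hrs. rew Hd1. reflexivity. }
  { reflexivity. }
  { rew Hs1. reflexivity. }
  destruct (Hin T r (s0 ∘ d0 ∘ r) (s0 ∘ d0 ∘ r)) as [sg2 [S20 S21]].
  { rew Hrs. rew Hd0. reflexivity. }
  { rew Hs0. reflexivity. }
  { reflexivity. }
  destruct (Htr T sg1 sg2) as [sg3 [S30 S31]]; [rewrite S11, S20; reflexivity|].
  destruct (Hout T sg3) as [rh [R0 R1]].
  exists rh. split.
  - rewrite R0, S30, S10. rew Hs0. reflexivity.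
  - rewrite R1, S31, S21. rew Hs1. reflexivity.
Qed.

End Relations.

Lemma slice_jointly_monic (E : Category) (Sigma : split_class E) (Y : E)
  (Ro Xo : SigmaSpecialSlice Sigma Y) (d0 d1 : Hom Ro Xo) :
  finitely_complete E -> point_congruous Sigma ->
  is_relation d0 d1 -> jointly_monic (sl_map d0) (sl_map d1).
Proof.
  destruct Ro as [[R rr] Sr], Xo as [[X x] Sx], d0 as [d0 Hd0], d1 as [d1 Hd1].
  intros HC HPC Hrel. apply (jointly_monic_of_special_tests HC HPC Sx Sr Hd0 Hd1).
  intros Q q a b Sq Ha Hb Ea Eb.
  pose (Qo := exist _ (existT _ Q q) Sq : SigmaSpecialSlice Sigma Y).
  pose (ha := Build_sl_hom (A := existT _ Q q) (B := existT _ R rr) Ha).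
  pose (hb := Build_sl_hom (A := existT _ Q q) (B := existT _ R rr) Hb).
  refine (f_equal (@sl_map _ _ _ _) (Hrel Qo ha hb _ _)); apply sl_hom_eq; assumption.
Qed.

Theorem theorem6p5 (E : Category) (Sigma : split_class E) :
  finitely_complete E ->
  is_class_of_split_epis Sigma ->
  point_congruous Sigma ->
  Sigma_Maltsev Sigma ->
  forall Y : E, Maltsev (SigmaSpecialSlice Sigma Y).
Proof.
  intros HC _ HPC HM Y [[R rr] Sr] [[X x] Sx] [d0 Hd0] [d1 Hd1] Hrel [[s0 Hs] [E0 E1]].
  simpl in *.
  pose proof (f_equal (@sl_map _ _ _ _) E0) as Hs0.
  pose proof (f_equal (@sl_map _ _ _ _) E1) as Hs1. simpl in Hs0, Hs1.
  pose proof (slice_jointly_monic HC HPC Hrel) as JM. simpl in JM.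
  split; [|split].
  - exists (Build_sl_hom (A := existT _ X x) (B := existT _ R rr) Hs).
    split; apply sl_hom_eq; assumption.
  - intros [[T t] St] [r Hr]. simpl in *.
    destruct (special_relation_symmetric HC HPC HM Sx Sr Hd0 Hd1 Hs0 Hs1 JM r)
      as [r' [F0 F1]].
    assert (Hr' : rr ∘ r' = t)
      by (rewrite <- Hd0, <- comp_assoc, F0, comp_assoc, Hd1; exact Hr).
    exists (Build_sl_hom (A := existT _ T t) (B := existT _ R rr) Hr').
    split; apply sl_hom_eq; assumption.
  - intros [[T t] St] [r1 Hr1] [r2 Hr2] Er.
    pose proof (f_equal (@sl_map _ _ _ _) Er) as Er'. simpl in *.
    destruct (special_relation_transitive HC HPC HM Sx Sr Hd0 Hs0 Hs1 JM Er')
      as [r3 [F0 F1]].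
    assert (Hr3 : rr ∘ r3 = t)
      by (rewrite <- Hd0, <- comp_assoc, F0, comp_assoc, Hd0; exact Hr1).
    exists (Build_sl_hom (A := existT _ T t) (B := existT _ R rr) Hr3).
    split; apply sl_hom_eq; assumption.
Qed.
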